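(* Let $p$ be a prime, $r\in\mathbb{N}$, and $M\in\mathrm{Mat}(d,\mathbb{Z})$ acting by $x\mapsto Mx \bmod p^r$ on $\tilde L_{p^r}=(\mathbb{Z}/p^r\mathbb{Z})^d$. Suppose $|\ker(M)|=p$. Then $|\ker(M^i)|=p^{\min(i,m)}$ for all $i\ge0$, where $m$ is the smallest integer $m\ge 0$ for which there exists $k\ge 1$ with $M^{k+m}\equiv M^m\pmod{p^r}$ (equivalently, the maximal pretail length). Consequently $v_i=p^{i-1}(p-1)$ for $1\le i\le m$, and all maximal pretails of $0$ have the same length $m$.
   Context: $\ker(M^j)=\{x\in\tilde L_{p^r}: M^jx\equiv0\}$. A point $y$ is periodic if $M^ky\equiv y$ for some $k\ge1$; a pretail of $y$ is a set $\{x,Mx,\dots,M^jx=y\}$ in which $y$ is the only periodic point, of length $j$; it is maximal if not contained in a longer pretail of $y$. The pretail tree of $0$ is the rooted tree (root $0$) formed by all pretails of $0$, with $x\neq0$ a child of $Mx$; $v_i$ is the number of its vertices at graph distance $i$ from the root. *)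

From HB Require Import structures.
From mathcomp Require Import all_boot all_order all_algebra.
Set Implicit Arguments. Unset Strict Implicit. Unset Printing Implicit Defensive.
Import GRing.Theory.
Local Open Scope ring_scope.

Definition modmx (n d : nat) (A : 'M[int]_d) : 'M['Z_n]_d :=
  map_mx (fun z : int => z%:~R) A.

Definition congr_mx (n d : nat) (A B : 'M[int]_d) : Prop :=
  modmx n A = modmx n B.

Definition act (n d : nat) (M : 'M[int]_d) (x : 'cV['Z_n]_d) : 'cV['Z_n]_d :=
  modmx n M *m x.

Definition kerM (n d : nat) (M : 'M[int]_d) (j : nat) : {set 'cV['Z_n]_d} :=
  [set x | modmx n (M ^+ j) *m x == 0].

Definition preperiod_cond (n d : nat) (M : 'M[int]_d) (m : nat) : Prop :=
  exists k : nat, (0 < k)%N /\ congr_mx n (M ^+ (k + m)) (M ^+ m).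
Definition is_min_preperiod (n d : nat) (M : 'M[int]_d) (m : nat) : Prop :=
  preperiod_cond n M m /\ forall m', preperiod_cond n M m' -> (m <= m')%N.

Definition periodic (T : Type) (f : T -> T) (y : T) : Prop :=
  exists k : nat, (0 < k)%N /\ iter k f y = y.

Definition is_pretail (T : eqType) (f : T -> T) (y x : T) (j : nat) : Prop :=
  [/\ iter j f x = y, uniq (traject f x j.+1)
    & forall z, z \in traject f x j.+1 -> periodic f z -> z = y].

Definition maximal_pretail (T : eqType) (f : T -> T) (y x : T) (j : nat) : Prop :=
  is_pretail f y x j /\
  ~ (exists x' j', [/\ is_pretail f y x' j', (j < j')%N
                     & {subset traject f x j.+1 <= traject f x' j'.+1}]).

Definition pretail_tree_vertex (T : eqType) (f : T -> T) (root z : T) : Prop :=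
  exists x j, is_pretail f root x j /\ z \in traject f x j.+1.

(* z is a vertex of the pretail tree at graph distance i from the root: the
   path from z to the root follows parents z -> f z -> f (f z) -> ... *)
Definition tree_at_dist (T : eqType) (f : T -> T) (root z : T) (i : nat) : Prop :=
  [/\ pretail_tree_vertex f root z, iter i f z = root
    & forall j, (j < i)%N -> iter j f z <> root].

From HB Require Import structures.
From mathcomp Require Import all_boot all_order all_algebra.
From mathcomp Require Import fingroup morphism quotient.
Set Implicit Arguments. Unset Strict Implicit. Unset Printing Implicit Defensive.
Import GRing.Theory.
Local Open Scope ring_scope.

(* The kernels K_i = ker A^i of A = M mod p^r form an increasing chain. As A^i
   maps K_(i+1) into K_1 with kernel K_i, each index |K_(i+1) : K_i| divides
   |K_1| = p, so the chain grows by a factor p per step until it stabilizes at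
   some s, and is constant from then on: |K_i| = p^(min i s). The chain is
   stable at s exactly when A^(k+s) = A^s for some k > 0, so s is the preperiod
   m. A point lies on a pretail of 0 of length i iff its height (the least i
   with A^i x = 0) is i, so level i of the tree is K_i \ K_(i-1); and for i < s
   the counting shows A maps K_(i+1) onto K_i, so every pretail shorter than s
   extends, whence all maximal pretails have length s. *)

Lemma pigeonhole_nat (T : finType) (f : nat -> T) :
  exists a b, (a < b)%N /\ f a = f b.
Proof.
have : ~~ injectiveb (fun i : 'I_#|T|.+1 => f i).
  by apply/negP => /injectiveP /leq_card; rewrite card_ord ltnn.
case/injectivePn => a [b neq_ab f_ab].
case: (ltngtP a b) => [lt_ab | lt_ba | eq_ab]; first by exists a, b.
- by exists b, a.
- by move: neq_ab; rewrite -val_eqE /= eq_ab eqxx.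
Qed.

Lemma mulmx_ext (R : pzSemiRingType) (d : nat) (B C : 'M[R]_d) :
  (forall v : 'cV[R]_d, B *m v = C *m v) -> B = C.
Proof.
move=> eqBC; apply/matrixP => i j; have := eqBC (delta_mx j 0).
by rewrite -!colE => /colP /(_ i); rewrite !mxE.
Qed.

Section KernelChain.

Variables (R : finComNzRingType) (d : nat).

Lemma mulmx_morphM (B : 'M[R]_d) :
  {in [set: 'cV[R]_d] &, {morph mulmx B : x y / (x * y)%g}}.
Proof. by move=> x y _ _; rewrite !FinRing.zmodMgE mulmxDr. Qed.

Definition mulmx_morphism (B : 'M[R]_d) := Morphism (mulmx_morphM B).

Variable A : 'M[R]_d.

Definition kerpow (i : nat) : {set 'cV[R]_d} := [set x | A ^+ i *m x == 0].

Lemma mulmx_exprD i j (x : 'cV[R]_d) : A ^+ i *m (A ^+ j *m x) = A ^+ (i + j) *m x.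
Proof. by rewrite mulmxA mulmxE -exprD. Qed.

Lemma iter_mulmx j (x : 'cV[R]_d) : iter j (mulmx A) x = A ^+ j *m x.
Proof. by elim: j => [|j IH] /=; rewrite ?expr0 ?mul1mx // IH -(mulmx_exprD 1). Qed.

Lemma kerpow0 : kerpow 0 = [set 0].
Proof. by apply/setP => x; rewrite !inE expr0 mul1mx. Qed.

Lemma kerpowE i : kerpow i = ('ker (mulmx_morphism (A ^+ i)))%g.
Proof. by apply/setP => x; rewrite !inE. Qed.

Lemma subset_kerpow i j : (i <= j)%N -> kerpow i \subset kerpow j.
Proof.
move=> le_ij; apply/subsetP => x; rewrite !inE => /eqP Aix.
by rewrite -(subnK le_ij) -mulmx_exprD Aix mulmx0.
Qed.

Lemma morphim_kerpow a b :
  (a <= b)%N -> (mulmx_morphism (A ^+ a) @* kerpow b)%g \subset kerpow (b - a).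
Proof.
move=> le_ab; apply/subsetP => _ /morphimP [x _ xK ->].
by move: xK; rewrite !inE /= mulmx_exprD subnK.
Qed.

Lemma card_morphim_kerpow a b : (a <= b)%N ->
  (#|(mulmx_morphism (A ^+ a) @* kerpow b)%g| * #|kerpow a|)%N = #|kerpow b|.
Proof.
move=> le_ab; rewrite kerpowE card_morphim setTI.
rewrite -(LagrangeI ('ker (mulmx_morphism (A ^+ b)))%G
                    ('ker (mulmx_morphism (A ^+ a)))%G) mulnC.
by rewrite /= -!kerpowE (setIidPr (subset_kerpow le_ab)).
Qed.

Lemma kerpow_stable s t :
  kerpow s = kerpow s.+1 -> (s <= t)%N -> kerpow t = kerpow s.
Proof.
move=> Ks; elim: t => [|t IH]; first by rewrite leqn0 => /eqP ->.
rewrite leq_eqVlt => /orP [/eqP <- // | le_st].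
rewrite -IH //; apply/eqP; rewrite eqEsubset (subset_kerpow (leqnSn t)) andbT.
apply/subsetP => x; rewrite !inE => At1x.
have : A ^+ (t - s) *m x \in kerpow s.+1 by rewrite inE mulmx_exprD addSn subnKC.
by rewrite -Ks inE mulmx_exprD addnC subnK.
Qed.

Lemma subset_kerpow_stable s t :
  kerpow s = kerpow s.+1 -> kerpow t \subset kerpow s.
Proof.
move=> Ks; case: (leqP s t) => [le_st | /ltnW le_ts].
- by rewrite (kerpow_stable Ks le_st).
- exact: subset_kerpow.
Qed.

Lemma kerpow_stabilizes : exists s, kerpow s == kerpow s.+1.
Proof.
set N := #|'cV[R]_d|.
have [s Ks | growing] := pickP (fun s : 'I_N.+1 => kerpow s == kerpow s.+1).
  by exists s.
have card_gt s : (s <= N)%N -> (s < #|kerpow s|)%N.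
  elim: s => [|s IH] le_sN; first by rewrite kerpow0 cards1.
  apply: leq_ltn_trans (IH (ltnW le_sN)) (proper_card _).
  by rewrite properEneq subset_kerpow // andbT (growing (Ordinal (leqW le_sN))).
by have := card_gt N (leqnn N); rewrite ltnNge max_card.
Qed.

Definition stable_index := ex_minn kerpow_stabilizes.

Lemma kerpow_stable_index : kerpow stable_index = kerpow stable_index.+1.
Proof. by rewrite /stable_index; case: ex_minnP => s /eqP. Qed.

Lemma stable_index_min n : kerpow n = kerpow n.+1 -> (stable_index <= n)%N.
Proof. by rewrite /stable_index; case: ex_minnP => s _ min_s /eqP /min_s. Qed.

Lemma kerpow_eqSP m :
  (exists2 k, (0 < k)%N & A ^+ (k + m) = A ^+ m) <-> kerpow m = kerpow m.+1.
Proof.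
split=> [[k k_gt0 AkmE] | Km].
  apply/eqP; rewrite eqEsubset subset_kerpow //=.
  apply/subsetP => x; rewrite !inE => /eqP Am1x.
  by rewrite -AkmE -(subnK k_gt0) -addnA add1n -mulmx_exprD Am1x mulmx0.
have [a [b [lt_ab AaE]]] := pigeonhole_nat (fun n => A ^+ n).
exists (b - a)%N; first by rewrite subn_gt0.
(* u := A^(b-a) v - v satisfies A^(a+m) u = (A^b - A^a) A^m v = 0, so u lies in ker A^m. *)
apply: mulmx_ext => v; apply/eqP; rewrite -subr_eq0.
set u := A ^+ (b - a) *m v - v.
have -> : A ^+ (b - a + m) *m v - A ^+ m *m v = A ^+ m *m u.
  by rewrite mulmxBr mulmx_exprD addnC.
have Amu : A ^+ m *m u \in kerpow a.
  rewrite inE mulmx_exprD mulmxBr mulmx_exprD addnAC (subnKC (ltnW lt_ab)).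
  by rewrite !exprD AaE subrr.
have : u \in kerpow (m + m).
  by move: (subsetP (subset_kerpow_stable a Km) _ Amu); rewrite !inE mulmx_exprD.
by rewrite (kerpow_stable Km (leq_addr m m)) inE.
Qed.

Definition has_height (z : 'cV[R]_d) (i : nat) : Prop :=
  A ^+ i *m z = 0 /\ forall j, (j < i)%N -> A ^+ j *m z != 0.

Lemma kerpow_levelP z i :
  (0 < i)%N -> z \in kerpow i :\: kerpow i.-1 <-> has_height z i.
Proof.
move=> i_gt0; rewrite !inE; split=> [/andP [zK /eqP Aiz] | [/eqP -> Anz]]; last first.
  by rewrite andbT Anz // ltn_predL.
split=> // j lt_ji; apply: contra zK => Ajz.
have le_j : (j <= i.-1)%N by rewrite -ltnS prednK.
by have := subsetP (subset_kerpow le_j) z; rewrite !inE; apply.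
Qed.

Lemma is_pretail_height z i : is_pretail (mulmx A) 0 z i <-> has_height z i.
Proof.
split=> [[] | [Aiz Anz]].
  rewrite iter_mulmx looping_uniq => Aiz /negP loop _; split=> // j lt_ji.
  apply/eqP => Ajz; apply: loop; apply/trajectP; exists j => //.
  by rewrite !iter_mulmx Aiz Ajz.
split; first by rewrite iter_mulmx.
  rewrite looping_uniq; apply/negP => /trajectP [j lt_ji].
  by rewrite !iter_mulmx Aiz => Ajz; move: (Anz j lt_ji); rewrite -Ajz eqxx.
(* A periodic point w = A^j z satisfies w = A^(k i) w = A^(k i - (i - j)) (A^i z) = 0. *)
move=> _ /trajectP [j lt_ji ->] [k [k_gt0 per]].
rewrite !iter_mulmx in per *; set w := A ^+ j *m z in per *.
have fix_w n : A ^+ (k * n) *m w = w.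
  by elim: n => [|n IH]; rewrite ?muln0 ?expr0 ?mul1mx // mulnS -mulmx_exprD IH per.
have le_ki : (i - j <= k * i)%N by apply: leq_trans (leq_subr j i) (leq_pmull i k_gt0).
rewrite -(fix_w i) /w -(subnK le_ki) -mulmx_exprD (mulmx_exprD (i - j)).
by rewrite subnK ?Aiz ?mulmx0 // -ltnS.
Qed.

Lemma tree_at_dist_height z i : tree_at_dist (mulmx A) 0 z i <-> has_height z i.
Proof.
split=> [[_] | hz].
  by rewrite iter_mulmx => Aiz Anz; split=> // j /Anz; rewrite iter_mulmx => /eqP.
have [Aiz Anz] := hz; split.
- by exists z, i; split; [apply/is_pretail_height | rewrite trajectS mem_head].
- by rewrite iter_mulmx.
- by move=> j /Anz; rewrite iter_mulmx => /eqP.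
Qed.

Lemma height_le_stable_index z j : has_height z j -> (j <= stable_index)%N.
Proof.
move=> [Ajz Anz]; rewrite leqNgt; apply/negP => lt_sj.
have j_gt0 : (0 < j)%N := leq_ltn_trans (leq0n _) lt_sj.
have Ks := kerpow_stable kerpow_stable_index.
have le_sj1 : (stable_index <= j.-1)%N by rewrite -ltnS prednK.
have : z \in kerpow j by rewrite inE Ajz.
rewrite (Ks j (ltnW lt_sj)) -(Ks _ le_sj1) inE.
by apply/negP; apply: Anz; rewrite ltn_predL.
Qed.

Section PrimeKernel.

Variable p : nat.
Hypotheses (p_prime : prime p) (card_kerpow1 : #|kerpow 1| = p).

(* The image of ker A^(i+1) under A^i is a subgroup of ker A, of prime order p. *)
Lemma card_kerpowS i :
  #|kerpow i.+1| = #|kerpow i| \/ #|kerpow i.+1| = (p * #|kerpow i|)%N.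
Proof.
have := card_morphim_kerpow (leqnSn i).
have : (#|(mulmx_morphism (A ^+ i) @* kerpow i.+1)%g| %| p)%N.
  have := morphim_kerpow (leqnSn i); rewrite subSnn -card_kerpow1 !kerpowE.
  exact: cardSg.
case/primeP: p_prime => _ dvdp /dvdp /orP [] /eqP -> <-.
- by left; rewrite mul1n.
- by right.
Qed.

Lemma card_kerpow i : #|kerpow i| = (p ^ minn i stable_index)%N.
Proof.
elim: i => [|i IH]; first by rewrite kerpow0 cards1 min0n.
have Ks := kerpow_stable kerpow_stable_index.
case: (ltnP i stable_index) => [lt_is | le_si]; last first.
  rewrite (minn_idPr le_si) in IH; rewrite (minn_idPr (leqW le_si)) -IH.
  by rewrite (Ks i.+1 (leqW le_si)) (Ks i le_si).
rewrite (minn_idPl (ltnW lt_is)) in IH; rewrite (minn_idPl lt_is) expnS -IH.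
case: (card_kerpowS i) => // card_eq.
have Ki : kerpow i = kerpow i.+1.
  by apply/eqP; rewrite eqEcard subset_kerpow // card_eq leqnn.
by have := stable_index_min Ki; rewrite leqNgt lt_is.
Qed.

Lemma stable_index_gt0 : (0 < stable_index)%N.
Proof.
rewrite lt0n; apply/eqP => s0; move: card_kerpow1.
by rewrite card_kerpow s0 minn0 expn0 => p1; move: (prime_gt1 p_prime); rewrite -p1.
Qed.

Lemma card_kerpow_level i : (0 < i <= stable_index)%N ->
  #|kerpow i :\: kerpow i.-1| = (p ^ i.-1 * p.-1)%N.
Proof.
case/andP => i_gt0 le_is.
rewrite cardsD (setIidPr (subset_kerpow (leq_pred i))) !card_kerpow.
rewrite (minn_idPl le_is) (minn_idPl (leq_trans (leq_pred i) le_is)).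
by rewrite -{1}(prednK i_gt0) expnS -{2}(mul1n (p ^ i.-1)%N) -mulnBl subn1 mulnC.
Qed.

Lemma kerpow_lift x j : (j < stable_index)%N -> x \in kerpow j ->
  exists2 y, y \in kerpow j.+1 & A *m y = x.
Proof.
move=> lt_js; suff -> : kerpow j = (mulmx_morphism (A ^+ 1) @* kerpow j.+1)%g.
  by case/morphimP => y _ yK ->; exists y; rewrite // expr1.
apply/eqP; rewrite eq_sym eqEcard.
have := morphim_kerpow (isT : (1 <= j.+1)%N); rewrite subn1 /= => -> /=.
have := card_morphim_kerpow (isT : (1 <= j.+1)%N).
rewrite !card_kerpow (minn_idPl lt_js) (minn_idPl (ltnW lt_js)) (minn_idPl stable_index_gt0).
by rewrite expn1 expnS mulnC => /eqP; rewrite eqn_mul2l gtn_eqF ?prime_gt0 // => /eqP ->.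
Qed.

Lemma height_lift x j : (j < stable_index)%N -> has_height x j ->
  exists2 y, has_height y j.+1 & A *m y = x.
Proof.
move=> lt_js [Ajx Anx]; case: (posnP j) => [j0 | j_gt0].
  have : kerpow 0 \proper kerpow 1.
    rewrite properEneq subset_kerpow // andbT; apply/negP => /eqP /stable_index_min.
    by rewrite leqNgt stable_index_gt0.
  case/properP => _ [y yK1 yK0]; exists y.
    by rewrite j0; apply/kerpow_levelP => //; rewrite inE yK1 yK0.
  by move: yK1 Ajx; rewrite j0 inE expr1 expr0 mul1mx => /eqP -> ->.
have xK : x \in kerpow j by rewrite inE Ajx.
have [y yK Ayx] := kerpow_lift lt_js xK.
exists y => //; split; first by apply/eqP; rewrite inE in yK.
case=> [_ | t lt_tj]; last by rewrite exprSr -mulmxE -mulmxA Ayx Anx.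
rewrite expr0 mul1mx; apply/eqP => y0; move: (Anx 0%N j_gt0).
by rewrite expr0 mul1mx -Ayx y0 mulmx0 eqxx.
Qed.

Lemma maximal_pretail_length (x : 'cV[R]_d) j :
  maximal_pretail (mulmx A) 0 x j -> j = stable_index.
Proof.
move=> [/is_pretail_height hx not_longer].
apply/eqP; rewrite eqn_leq (height_le_stable_index hx) /=.
rewrite leqNgt; apply/negP => lt_js; apply: not_longer.
have [y hy Ayx] := height_lift lt_js hx.
exists y, j.+1; split=> //; first exact/is_pretail_height.
by move=> z zx; rewrite trajectS inE /= Ayx zx orbT.
Qed.

End PrimeKernel.

End KernelChain.

Lemma modmxX n d (M : 'M[int]_d) j : modmx n (M ^+ j) = modmx n M ^+ j.
Proof.
elim: j => [|j IH]; first by rewrite !expr0 /modmx map_mx1.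
by rewrite !exprS -!mulmxE -IH /modmx map_mxM.
Qed.

Lemma congr_mx_exprP n d (M : 'M[int]_d) a b :
  congr_mx n (M ^+ a) (M ^+ b) <-> modmx n M ^+ a = modmx n M ^+ b.
Proof. by rewrite /congr_mx !modmxX. Qed.

Lemma min_preperiod_stable_index n d (M : 'M[int]_d) m :
  is_min_preperiod n M m -> m = stable_index (modmx n M).
Proof.
move=> [[k [k_gt0 /congr_mx_exprP per_m]] min_m]; apply/eqP; rewrite eqn_leq.
apply/andP; split.
- apply: min_m; have /kerpow_eqSP [k' k'_gt0 per] := kerpow_stable_index (modmx n M).
  by exists k'; split=> //; apply/congr_mx_exprP.
- by apply: stable_index_min; apply/kerpow_eqSP; exists k.
Qed.

Theorem proposition3p5 (p r d : nat) (M : 'M[int]_d) :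
  prime p -> (0 < r)%N ->
  #|kerM (p ^ r) M 1| = p ->
  forall m : nat, is_min_preperiod (p ^ r) M m ->
  [/\ forall i : nat, #|kerM (p ^ r) M i| = (p ^ minn i m)%N,
      forall i : nat, (1 <= i <= m)%N ->
        exists S : {set 'cV['Z_(p ^ r)]_d},
          (forall z, z \in S <-> tree_at_dist (@act (p ^ r) d M) 0 z i) /\
          #|S| = (p ^ i.-1 * p.-1)%N
    & forall (x : 'cV['Z_(p ^ r)]_d) (j : nat),
        maximal_pretail (@act (p ^ r) d M) 0 x j -> j = m].
Proof.
move=> p_prime _ card_ker1 m /min_preperiod_stable_index ->.
set A := modmx (p ^ r) M.
have kerME j : kerM (p ^ r) M j = kerpow A j by rewrite /kerM modmxX.
have actE : @act (p ^ r) d M = mulmx A by [].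
rewrite kerME in card_ker1; rewrite actE.
split.
- by move=> i; rewrite kerME (card_kerpow p_prime card_ker1).
- move=> i lvl_i; have i_gt0 : (0 < i)%N by case/andP: lvl_i.
  exists (kerpow A i :\: kerpow A i.-1); split.
    move=> z; apply: iff_trans (kerpow_levelP _ _ i_gt0) _.
    exact: iff_sym (tree_at_dist_height _ _ _).
  exact: card_kerpow_level p_prime card_ker1 _ lvl_i.
- by move=> x j; apply: maximal_pretail_length p_prime card_ker1 x j.
Qed.
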